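(* Let $L,R$ be nonempty subsets of a group $G$ and $s\in G$. In $2\mathrm{S}(G;L,R)$, if $g=w_{\bar{L},m,a}\,s\,w_{\bar{R},n,b}$ for integers $m,a,n,b\ge0$, then for every $l\in L$ and $r\in R$ we have $g\sim l^ds$ and $g\sim sr^d$, where $d=m+n-(a+b)$.
   Context: For nonempty subsets $L,R$ of a group $G$, the two-sided group digraph $2\mathrm{S}(G;L,R)$ has vertex set $G$ and a directed arc $(g,h)$ if and only if $h=l^{-1}gr$ for some $l\in L$, $r\in R$. Write $\bar{L}=L\cup L^{-1}$, $\bar{R}=R\cup R^{-1}$. The notation $w_{\bar{L},m,a}$ denotes the value of a word (finite product, empty product $=e$) with $m$ factors from $L$ and $a$ factors from $L^{-1}$ in some order; similarly $w_{\bar{R},n,b}$ has $n$ factors from $R$ and $b$ from $R^{-1}$. $g\sim h$ means $g$ is weakly connected to $h$: there is a sequence $g=g_0,\dots,g_n=h$ with, for each $i$, $(g_{i-1},g_i)$ or $(g_i,g_{i-1})$ an arc. *)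

From Stdlib Require Import ZArith List Relations.
Import ListNotations.

Record Group := {
  carrier :> Type;
  gmul : carrier -> carrier -> carrier;
  ginv : carrier -> carrier;
  gone : carrier;
  gmulA : forall x y z, gmul x (gmul y z) = gmul (gmul x y) z;
  gmul1l : forall x, gmul gone x = x;
  gmulVl : forall x, gmul (ginv x) x = gone
}.

Arguments gmul {G} : rename.
Arguments ginv {G} : rename.
Arguments gone {G} : rename.

Fixpoint npow {G : Group} (g : G) (n : nat) : G :=
  match n with
  | O => gone
  | S k => gmul g (npow g k)
  end.

Definition zpow {G : Group} (g : G) (z : Z) : G :=
  match z with
  | Z0 => gone
  | Zpos p => npow g (Pos.to_nat p)
  | Zneg p => ginv (npow g (Pos.to_nat p))
  end.

Definition arc {G : Group} (L R : G -> Prop) (g h : G) : Prop :=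
  exists l r, L l /\ R r /\ h = gmul (gmul (ginv l) g) r.

Definition wconn {G : Group} (L R : G -> Prop) : G -> G -> Prop :=
  clos_refl_sym_trans G (arc L R).

(* A word over S ∪ S^-1: a list of factors (b, x) with x ∈ S, the factor
   being x if b = true (factor from S) and x^-1 if b = false (factor from S^-1). *)
Definition factor {G : Group} (f : bool * G) : G :=
  if fst f then snd f else ginv (snd f).

Definition word_val {G : Group} (w : list (bool * G)) : G :=
  fold_right (fun f acc => gmul (factor f) acc) gone w.

(* is_word S m a x : x = w_{S̄,m,a} for some word with m factors from S and
   a factors from S^-1 *)
Definition is_word {G : Group} (S : G -> Prop) (m a : nat) (x : G) : Prop :=
  exists w : list (bool * G),
    (forall f, In f w -> S (snd f)) /\
    length (filter (fun f => fst f) w) = m /\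
    length (filter (fun f => negb (fst f)) w) = a /\
    x = word_val w.

(* An arc of 2S(G;L,R) joins l z to z r for every z, l ∈ L, r ∈ R.  Hence the
   pairs (x, y) such that x z ~ z y for all z form a subgroup of G × G
   containing L × R.  A word in L̄ with exponent sum e is therefore paired
   with r^e, a word in R̄ with exponent sum e with l^e, and l^c with r^c;
   multiplying these pairs moves every letter of w_{L̄,m,a} s w_{R̄,n,b}
   across s and collects them into l^d on the left or r^d on the right. *)
From Stdlib Require Import ZArith List Relations Lia.

Local Infix "·" := gmul (at level 40, left associativity).

Section GroupFacts.
Context {G : Group}.
Implicit Types x y z : G.

Lemma gmulKl x z : ginv x · (x · z) = z.
Proof. rewrite gmulA, gmulVl; apply gmul1l. Qed.

Lemma gmulVr x : x · ginv x = gone.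
Proof.
  rewrite <- (gmulKl (ginv x) (x · ginv x)), (gmulA _ (ginv x)), gmulVl, gmul1l.
  apply gmulVl.
Qed.

Lemma gmul1r x : x · gone = x.
Proof. rewrite <- (gmulVl G x), gmulA, gmulVr; apply gmul1l. Qed.

Lemma gmulKVl x z : x · (ginv x · z) = z.
Proof. rewrite gmulA, gmulVr; apply gmul1l. Qed.

Lemma gmulKr y z : z · y · ginv y = z.
Proof. rewrite <- gmulA, gmulVr; apply gmul1r. Qed.

Lemma gmulKVr y z : z · ginv y · y = z.
Proof. rewrite <- gmulA, gmulVl; apply gmul1r. Qed.

Lemma ginv1 : ginv (@gone G) = gone.
Proof. rewrite <- (gmul1l G (ginv gone)); apply gmulVr. Qed.

Lemma ginvM x y : ginv (x · y) = ginv y · ginv x.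
Proof.
  assert (H : x · y · (ginv y · ginv x) = gone)
    by (rewrite gmulA, gmulKr; apply gmulVr).
  rewrite <- (gmulKl (x · y) (ginv y · ginv x)), H; symmetry; apply gmul1r.
Qed.

Lemma npow_mulC x n : npow x n · x = x · npow x n.
Proof.
  induction n as [|n IH]; simpl.
  - rewrite gmul1l; symmetry; apply gmul1r.
  - rewrite <- gmulA, IH; reflexivity.
Qed.

Lemma zpow_1 x : zpow x 1 = x.
Proof. apply gmul1r. Qed.

Lemma zpow_m1 x : zpow x (-1) = ginv x.
Proof. exact (f_equal ginv (gmul1r x)). Qed.

Lemma zpow_of_nat x n : zpow x (Z.of_nat n) = npow x n.
Proof. destruct n; simpl; [|rewrite SuccNat2Pos.id_succ]; reflexivity. Qed.

Lemma zpow_opp_of_nat x n : zpow x (- Z.of_nat n) = ginv (npow x n).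
Proof.
  destruct n; simpl; [symmetry; apply ginv1|].
  rewrite SuccNat2Pos.id_succ; reflexivity.
Qed.

Lemma zpow_succ x c : zpow x (Z.succ c) = x · zpow x c.
Proof.
  destruct (Z_le_gt_dec 0 c) as [Hc|Hc].
  - replace c with (Z.of_nat (Z.to_nat c)) by lia.
    rewrite <- Nat2Z.inj_succ, !zpow_of_nat; reflexivity.
  - replace c with (- Z.of_nat (S (Z.to_nat (- c) - 1)))%Z by lia.
    replace (Z.succ _) with (- Z.of_nat (Z.to_nat (- c) - 1))%Z by lia.
    rewrite !zpow_opp_of_nat; simpl.
    rewrite <- npow_mulC, ginvM, gmulKVl; reflexivity.
Qed.

Lemma zpow_pred x c : zpow x (Z.pred c) = ginv x · zpow x c.
Proof. rewrite <- (Z.succ_pred c) at 2; rewrite zpow_succ, gmulKl; reflexivity. Qed.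

Lemma zpow_add x c c' : zpow x (c + c') = zpow x c · zpow x c'.
Proof.
  induction c as [|c IH|c IH] using Z.peano_ind.
  - symmetry; apply gmul1l.
  - rewrite Z.add_succ_l, !zpow_succ, IH, gmulA; reflexivity.
  - rewrite Z.add_pred_l, !zpow_pred, IH, gmulA; reflexivity.
Qed.

End GroupFacts.

Section Exchange.
Context {G : Group}.
Implicit Types x y z : G.

Definition exponent (f : bool * G) : Z := if fst f then 1%Z else (-1)%Z.

Definition exponent_sum (w : list (bool * G)) : Z :=
  fold_right (fun f e => exponent f + e)%Z 0%Z w.

Lemma exponent_sum_filter w :
  exponent_sum w = (Z.of_nat (length (filter (fun f => fst f) w))
                    - Z.of_nat (length (filter (fun f => negb (fst f)) w)))%Z.
Proof.
  induction w as [|f w IH]; [reflexivity|].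
  change (exponent_sum (f :: w)) with (exponent f + exponent_sum w)%Z.
  destruct f as [[] y]; cbn [exponent filter length fst negb].
  all: rewrite ?Nat2Z.inj_succ; lia.
Qed.

Lemma is_word_exponent_sum {S m a x} : is_word S m a x ->
  exists w, (forall f, In f w -> S (snd f)) /\
            exponent_sum w = (Z.of_nat m - Z.of_nat a)%Z /\ x = word_val w.
Proof.
  intros (w & HS & Hm & Ha & ->).
  exists w; rewrite exponent_sum_filter, Hm, Ha; auto.
Qed.

Section PairSubgroup.
Variable P : G -> G -> Prop.
Hypothesis P_one : P gone gone.
Hypothesis P_mul : forall x y x' y', P x y -> P x' y' -> P (x · x') (y · y').
Hypothesis P_inv : forall x y, P x y -> P (ginv x) (ginv y).

Lemma P_npow x y n : P x y -> P (npow x n) (npow y n).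
Proof. intro Hxy; induction n; simpl; auto. Qed.

Lemma P_zpow x y c : P x y -> P (zpow x c) (zpow y c).
Proof. intro Hxy; destruct c; simpl; auto using P_npow. Qed.

Lemma P_word (S : G -> Prop) t (w : list (bool * G)) :
  (forall y, S y -> P y t) -> (forall f, In f w -> S (snd f)) ->
  P (word_val w) (zpow t (exponent_sum w)).
Proof.
  intros HSt; induction w as [|f w IH]; intros HwS; [exact P_one|].
  change (word_val (f :: w)) with (factor f · word_val w).
  change (exponent_sum (f :: w)) with (exponent f + exponent_sum w)%Z.
  rewrite zpow_add; apply P_mul; [|apply IH; intros; apply HwS; right; auto].
  specialize (HSt (snd f) (HwS f (or_introl eq_refl))).
  destruct f as [[] y]; unfold factor, exponent; cbn [fst snd] in *.
  - rewrite zpow_1; exact HSt.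
  - rewrite zpow_m1; auto.
Qed.

End PairSubgroup.

Variables L R : G -> Prop.

Definition exchangeable x y : Prop := forall z, wconn L R (x · z) (z · y).

Lemma exchangeable_arc l r : L l -> R r -> exchangeable l r.
Proof.
  intros Hl Hr z; apply rst_step.
  exists l, r; repeat split; auto; rewrite gmulKl; reflexivity.
Qed.

Lemma exchangeable_one : exchangeable gone gone.
Proof. intro z; rewrite gmul1l, gmul1r; apply rst_refl. Qed.

Lemma exchangeable_mul {x y x' y'} :
  exchangeable x y -> exchangeable x' y' -> exchangeable (x · x') (y · y').
Proof.
  intros Hxy Hxy' z; apply rst_trans with (x' · z · y).
  - rewrite <- (gmulA _ x x' z); apply Hxy.
  - rewrite (gmulA _ z y y'), <- (gmulA _ x' z y); apply Hxy'.
Qed.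

Lemma exchangeable_inv {x y} : exchangeable x y -> exchangeable (ginv x) (ginv y).
Proof.
  intros Hxy z; apply rst_sym.
  specialize (Hxy (ginv x · z · ginv y)).
  rewrite gmulKVr, <- (gmulA _ (ginv x) z), gmulKVl in Hxy; exact Hxy.
Qed.

Lemma exchangeable_word_left {u m a r} : is_word L m a u -> R r ->
  exchangeable u (zpow r (Z.of_nat m - Z.of_nat a)).
Proof.
  intros Hu Hr; destruct (is_word_exponent_sum Hu) as (w & HwL & <- & ->).
  apply (P_word exchangeable exchangeable_one (@exchangeable_mul) (@exchangeable_inv) L);
    auto using exchangeable_arc.
Qed.

Lemma exchangeable_word_right {v n b l} : is_word R n b v -> L l ->
  exchangeable (zpow l (Z.of_nat n - Z.of_nat b)) v.
Proof.
  intros Hv Hl; destruct (is_word_exponent_sum Hv) as (w & HwR & <- & ->).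
  apply (P_word (fun y x => exchangeable x y)) with R; auto.
  - apply exchangeable_one.
  - intros; apply exchangeable_mul; auto.
  - intros; apply exchangeable_inv; auto.
  - intros; apply exchangeable_arc; auto.
Qed.

Lemma exchangeable_zpow {l r} c : L l -> R r -> exchangeable (zpow l c) (zpow r c).
Proof.
  intros Hl Hr.
  apply (P_zpow exchangeable exchangeable_one (@exchangeable_mul) (@exchangeable_inv)).
  apply exchangeable_arc; auto.
Qed.

End Exchange.

Theorem mainTheorem14 (G : Group) (L R : G -> Prop)
  (HL : exists l, L l) (HR : exists r, R r) (s g : G) (m a n b : nat)
  (u v : G) (Hu : is_word L m a u) (Hv : is_word R n b v)
  (Hg : g = gmul (gmul u s) v) :
  let d := (Z.of_nat m + Z.of_nat n - (Z.of_nat a + Z.of_nat b))%Z in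
  forall l r, L l -> R r ->
    wconn L R g (gmul (zpow l d) s) /\ wconn L R g (gmul s (zpow r d)).
Proof.
  intros d l r Hl Hr; subst g.
  pose proof (exchangeable_word_left L R Hu Hr) as Hur.
  pose proof (exchangeable_word_right L R Hv Hl) as Hlv.
  set (eu := (Z.of_nat m - Z.of_nat a)%Z) in Hur.
  set (ev := (Z.of_nat n - Z.of_nat b)%Z) in Hlv.
  assert (Hd : d = (ev + eu)%Z) by (unfold d, eu, ev; lia).
  rewrite Hd, !zpow_add; split.
  - apply rst_trans with (s · v · zpow r eu).
    + rewrite <- (gmulA _ u s v); exact (Hur (s · v)).
    + rewrite <- (gmulA _ s v); apply rst_sym.
      exact (exchangeable_mul L R Hlv (exchangeable_zpow L R eu Hl Hr) s).
  - apply rst_trans with (zpow l ev · (u · s)).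
    + apply rst_sym; exact (Hlv (u · s)).
    + rewrite (gmulA _ (zpow l ev) u s).
      exact (exchangeable_mul L R (exchangeable_zpow L R ev Hl Hr) Hur s).
Qed.
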